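(* Let $\mathcal{JS}=(\mathcal F,\mathcal F_d,R,\mathcal B)$ be a justification system. For every locally complete graph-like (respectively tree-like) justification $J$ and every internal node $n$ of $J$ with label $x=\ell(n)\in\mathcal F_d$, there exists a connected, locally complete graph-like (respectively tree-like) justification $J'$ with a node $n'$ labelled $x$ from which every node of $J'$ is reachable (so $x$ is a root of $J'$), such that $\mathrm{val}(J,n,\mathcal I)\le_t \mathrm{val}(J',n',\mathcal I)$ for all interpretations $\mathcal I$.
   Context: Let $\mathcal F$ be a set (the fact space) containing $\mathcal L=\{\mathbf t,\mathbf f,\mathbf u\}$, equipped with an involution $\sim:\mathcal F\to\mathcal F$ with $\sim\mathbf t=\mathbf f$, $\sim\mathbf u=\mathbf u$ and $\sim x\neq x$ for all $x\neq\mathbf u$; for $A\subseteq\mathcal F$ put $\sim A=\{\sim a:a\in A\}$. On $\mathcal L$ the truth order is $\mathbf f<_t\mathbf u<_t\mathbf t$; $\bigwedge$ and $\bigvee$ denote greatest lower and least upper bounds in $(\mathcal L,\le_t)$ (so $\bigvee\emptyset=\mathbf f$, $\bigwedge\emptyset=\mathbf t$); $\sim$ reverses $\le_t$ on $\mathcal L$. A justification frame is $\mathcal{JF}=(\mathcal F,\mathcal F_d,R)$ where $\mathcal F_d\subseteq\mathcal F$ (defined facts) satisfies $\sim\mathcal F_d=\mathcal F_d$ and $\mathcal F_d\cap\mathcal L=\emptyset$, and $R\subseteq\mathcal F_d\times 2^{\mathcal F}$ is a set of rules, written $x\gets A$, such that no rule has empty body and every $x\in\mathcal F_d$ is the head of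 at least one rule. $\mathcal F_o=\mathcal F\setminus\mathcal F_d$ are the open facts. A justification in $\mathcal{JF}$ is a directed graph $(N,E)$ with a labelling $\ell:N\to\mathcal F$ such that every internal node $n$ (node with at least one outgoing edge) satisfies $\ell(n)\in\mathcal F_d$ and $\ell(n)\gets\{\ell(m):(n,m)\in E\}\in R$; nodes without outgoing edges are leaves. It is graph-like if $\ell$ is injective, and tree-like if its underlying undirected graph is acyclic. It is locally complete if no leaf is labelled by a defined fact, connected if its underlying undirected graph is connected, and $x$ is a root of it if some node $n$ with $\ell(n)=x$ reaches every node. A $\mathcal{JF}$-branch is either an infinite sequence $x_0\to x_1\to\cdots$ of defined facts or a finite sequence $x_0\to\cdots\to x_k$ ($k\ge1$) with $x_0,\dots,x_{k-1}\in\mathcal F_d$ and $x_k\in\mathcal F_o$. For a node $n$ of a locally complete justification $J$, $B_J(n)$ is the set of label sequences of maximal paths of $J$ starting at $n$ (infinite, or ending in a leaf). A branch evaluation $\mathcal B$ assigns to each $\mathcal{JF}$-branch an element of $\mathcal F$. A justification system is $\mathcal{JS}=(\mathcal F,\mathcal F_d,R,\mathcal B)$. An interpretation is a map $\mathcal I:\mathcal F\to\mathcal L$ with $\mathcal I(\sim x)=\sim\mathcal I(x)$ for all $x$ and $\mathcal I(l)=l$ for $l\in\mathcal L$. The value of a node $n$ of a locally complete justification $J$ is $\mathrm{val}(J,n,\mathcal I)=\bigwedge_{b\in B_J(n)}\mathcal I(\mathcal B(b))$. *)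

From Stdlib Require Import List Relations Classical ClassicalEpsilon.
Import ListNotations.

Inductive tv : Type := tv_t | tv_f | tv_u.

Definition tv_rank (v : tv) : nat :=
  match v with tv_f => 0 | tv_u => 1 | tv_t => 2 end.

Definition tv_le (a b : tv) : Prop := tv_rank a <= tv_rank b.

Definition tv_neg (v : tv) : tv :=
  match v with tv_t => tv_f | tv_f => tv_t | tv_u => tv_u end.

(** greatest lower bound in (L, <=_t) of an arbitrary subset S of L
    (glb of the empty set is t). *)
Definition tv_glb (S : tv -> Prop) : tv :=
  if excluded_middle_informative (S tv_f) then tv_f
  else if excluded_middle_informative (S tv_u) then tv_u
  else tv_t.

(** Fact space: a type F containing L (via the injection [lit]) with an
    involution [neg] satisfying the stated properties. *)
Definition fact_space {F : Type} (neg : F -> F) (lit : tv -> F) : Prop :=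
  (forall a b, lit a = lit b -> a = b) /\
  (forall x, neg (neg x) = x) /\
  neg (lit tv_t) = lit tv_f /\
  neg (lit tv_u) = lit tv_u /\
  (forall x, x <> lit tv_u -> neg x <> x).

(** Justification frame (F, Fd, R); a rule x <- A is [R x A], the body A
    being a subset of F (a predicate). *)
Definition justification_frame {F : Type} (neg : F -> F) (lit : tv -> F)
    (Fd : F -> Prop) (R : F -> (F -> Prop) -> Prop) : Prop :=
  fact_space neg lit /\
  (forall x, Fd x -> Fd (neg x)) /\
  (forall x, Fd (neg x) -> Fd x) /\
  (forall v, ~ Fd (lit v)) /\
  (forall x A, R x A -> Fd x) /\
  (forall x A, R x A -> exists y, A y) /\
  (forall x, Fd x -> exists A, R x A).

Inductive branch (F : Type) : Type :=
| branch_inf : (nat -> F) -> branch F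
| branch_fin : list F -> branch F.
Arguments branch_inf {F} _.
Arguments branch_fin {F} _.

Record lgraph (F : Type) : Type := {
  jN : Type;
  jE : jN -> jN -> Prop;
  jl : jN -> F }.
Arguments jN {F} _.
Arguments jE {F} _ _ _.
Arguments jl {F} _ _.

Section Just.
Context {F : Type} (Fd : F -> Prop) (R : F -> (F -> Prop) -> Prop).

Definition internal (J : lgraph F) (n : jN J) : Prop := exists m, jE J n m.
Definition leaf (J : lgraph F) (n : jN J) : Prop := ~ internal J n.

Definition is_justification (J : lgraph F) : Prop :=
  forall n, internal J n ->
    Fd (jl J n) /\
    exists A, R (jl J n) A /\ (forall y, A y <-> exists m, jE J n m /\ jl J m = y).

Definition graph_like (J : lgraph F) : Prop :=
  forall n m, jl J n = jl J m -> n = m.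

(** Underlying undirected multigraph (one undirected edge per directed
    edge) is acyclic: no self-loop, no pair of antiparallel edges, and no
    simple cycle of length >= 3. *)
Definition undir_adj (J : lgraph F) (n m : jN J) : Prop := jE J n m \/ jE J m n.

Definition tree_like (J : lgraph F) : Prop :=
  (forall n, ~ jE J n n) /\
  (forall n m, jE J n m -> ~ jE J m n) /\
  (forall (k : nat) (v : nat -> jN J),
      2 <= k ->
      (forall i j, i <= k -> j <= k -> v i = v j -> i = j) ->
      (forall i, i < k -> undir_adj J (v i) (v (S i))) ->
      ~ undir_adj J (v k) (v 0)).

Definition locally_complete (J : lgraph F) : Prop :=
  forall n, leaf J n -> ~ Fd (jl J n).

Definition connected (J : lgraph F) : Prop :=
  forall n m, clos_refl_sym_trans _ (jE J) n m.

Definition reaches_all (J : lgraph F) (n : jN J) : Prop :=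
  forall m, clos_refl_trans _ (jE J) n m.

(** B_J(n): label sequences of maximal paths starting at n. *)
Definition in_BJ (J : lgraph F) (n : jN J) (b : branch F) : Prop :=
  (exists p : nat -> jN J,
      p 0 = n /\ (forall i, jE J (p i) (p (S i))) /\
      b = branch_inf (fun i => jl J (p i))) \/
  (exists (k : nat) (p : nat -> jN J),
      p 0 = n /\ (forall i, i < k -> jE J (p i) (p (S i))) /\ leaf J (p k) /\
      b = branch_fin (map (fun i => jl J (p i)) (seq 0 (S k)))).

Definition val (Bev : branch F -> F) (J : lgraph F) (n : jN J) (I : F -> tv) : tv :=
  tv_glb (fun v => exists b, in_BJ J n b /\ I (Bev b) = v).

End Just.

Definition interpretation {F : Type} (neg : F -> F) (lit : tv -> F) (I : F -> tv) : Prop :=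
  (forall x, I (neg x) = tv_neg (I x)) /\ (forall v, I (lit v) = v).

From Stdlib Require Import List Relations ClassicalEpsilon ProofIrrelevance Lia FunctionalExtensionality.

(** The justification J' of the theorem is the part of J reachable from n.

    More generally, call a set P of nodes of J forward closed if every edge
    leaving P ends in P.  The restriction of J to such a P keeps exactly the
    outgoing edges of its nodes, so it is again a justification, locally
    complete, graph-like or tree-like whenever J is, and every maximal path
    of J starting in P stays in P.  Hence B_J(a) and therefore the value of
    a node a in P are the same in J and in the restriction.

    Taking for P the nodes reachable from n gives a forward closed set in
    which n reaches every node, so the restriction is connected with root
    n, and val(J, n, I) = val(J', n, I) for every interpretation I. *)

Lemma tv_glb_ext (S T : tv -> Prop) :
  (forall v, S v <-> T v) -> tv_glb S = tv_glb T.
Proof.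
  intros HST. unfold tv_glb.
  destruct (excluded_middle_informative (S tv_f)),
           (excluded_middle_informative (T tv_f)); try firstorder.
  destruct (excluded_middle_informative (S tv_u)),
           (excluded_middle_informative (T tv_u)); firstorder.
Qed.

Lemma tv_le_refl (v : tv) : tv_le v v.
Proof. unfold tv_le; lia. Qed.

Section Restriction.
Context {F : Type} (J : lgraph F) (P : jN J -> Prop).
Hypothesis P_closed : forall a b, P a -> jE J a b -> P b.

Definition restrict : lgraph F :=
  {| jN := {m : jN J | P m};
     jE := fun a b => jE J (proj1_sig a) (proj1_sig b);
     jl := fun a => jl J (proj1_sig a) |}.

Lemma restrict_node_eq (a b : jN restrict) : proj1_sig a = proj1_sig b -> a = b.
Proof. destruct a, b; simpl; intros ->. f_equal. apply proof_irrelevance. Qed.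

(** Since P is forward closed, a node keeps all its successors. *)
Lemma restrict_internal (a : jN restrict) :
  internal restrict a <-> internal J (proj1_sig a).
Proof.
  split; intros [m Hm].
  - exists (proj1_sig m). exact Hm.
  - exists (exist _ m (P_closed _ _ (proj2_sig a) Hm)). exact Hm.
Qed.

Lemma restrict_justification Fd R :
  is_justification Fd R J -> is_justification Fd R restrict.
Proof.
  intros HJ a Ha. apply restrict_internal in Ha.
  destruct (HJ _ Ha) as [HFd [A [HR Hbody]]].
  split; [exact HFd|]. exists A. split; [exact HR|].
  intros y. rewrite Hbody. split; intros [m [Hm Hl]].
  - exists (exist _ m (P_closed _ _ (proj2_sig a) Hm)). auto.
  - exists (proj1_sig m). auto.
Qed.

Lemma restrict_locally_complete Fd :
  locally_complete Fd J -> locally_complete Fd restrict.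
Proof. intros HJ a Ha. apply HJ. intros Hi. apply Ha, restrict_internal, Hi. Qed.

Lemma restrict_graph_like : graph_like J -> graph_like restrict.
Proof. intros HJ a b Hl. apply restrict_node_eq, HJ, Hl. Qed.

(** A cycle in the restriction projects to a cycle in J. *)
Lemma restrict_tree_like : tree_like J -> tree_like restrict.
Proof.
  intros [Hloop [Hanti Hcycle]]. split; [|split].
  - intros a. apply Hloop.
  - intros a b. apply Hanti.
  - intros k v Hk Hinj Hadj. apply (Hcycle k (fun i => proj1_sig (v i)) Hk).
    + intros i j Hi Hj Heq. apply Hinj; auto. apply restrict_node_eq, Heq.
    + exact Hadj.
Qed.

Section Paths.
Variable a : jN restrict.

(** Pull a node of J back into the restriction (defaulting to a). *)
Definition pullback (m : jN J) : jN restrict :=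
  match excluded_middle_informative (P m) with
  | left Hm => exist _ m Hm
  | right _ => a
  end.

Lemma pullback_val m : P m -> proj1_sig (pullback m) = m.
Proof. intros Hm. unfold pullback. destruct excluded_middle_informative; tauto. Qed.

Lemma path_in_P (p : nat -> jN J) (k : nat) :
  p 0 = proj1_sig a -> (forall i, i < k -> jE J (p i) (p (S i))) ->
  forall i, i <= k -> P (p i).
Proof.
  intros H0 Hpath. induction i as [|i IH]; intros Hi.
  - rewrite H0. exact (proj2_sig a).
  - apply (P_closed (p i)); [apply IH | apply Hpath]; lia.
Qed.

Lemma restrict_branches (b : branch F) :
  in_BJ J (proj1_sig a) b <-> in_BJ restrict a b.
Proof.
  split.
  - intros [[p [H0 [Hpath ->]]] | [k [p [H0 [Hpath [Hleaf ->]]]]]].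
    + assert (HP : forall i, P (p i)).
      { intros i. apply (path_in_P p (S i) H0); [intros j _; apply Hpath | lia]. }
      left. exists (fun i => pullback (p i)). repeat split.
      * apply restrict_node_eq. rewrite pullback_val; auto.
      * intros i. simpl. rewrite !pullback_val; auto.
      * f_equal. apply functional_extensionality. intros i. simpl.
        rewrite pullback_val; auto.
    + pose proof (path_in_P p k H0 Hpath) as HP.
      right. exists k, (fun i => pullback (p i)). repeat split.
      * apply restrict_node_eq. rewrite pullback_val; auto. apply HP; lia.
      * intros i Hi. simpl. rewrite !pullback_val; try apply HP; auto; lia.
      * intros Hi. apply restrict_internal in Hi.
        rewrite pullback_val in Hi; auto.
      * f_equal. apply map_ext_in. intros i Hi. apply in_seq in Hi. simpl.
        rewrite pullback_val; auto. apply HP; lia.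
  - intros [[p [H0 [Hpath ->]]] | [k [p [H0 [Hpath [Hleaf ->]]]]]].
    + left. exists (fun i => proj1_sig (p i)). rewrite H0. auto.
    + right. exists k, (fun i => proj1_sig (p i)). rewrite H0.
      repeat split; auto. intros Hi. apply Hleaf, restrict_internal, Hi.
Qed.

Lemma restrict_val (Bev : branch F -> F) (I : F -> tv) :
  val Bev J (proj1_sig a) I = val Bev restrict a I.
Proof.
  apply tv_glb_ext. intros v.
  split; intros [b [Hb Hv]]; exists b; split; auto; apply restrict_branches; auto.
Qed.

End Paths.
End Restriction.

Section Reachable.
Context {F : Type} (J : lgraph F) (n : jN J).

Definition reachable (m : jN J) : Prop := clos_refl_trans _ (jE J) n m.

Lemma reachable_closed a b : reachable a -> jE J a b -> reachable b.
Proof. intros Ha Hab. eapply rt_trans; [exact Ha | apply rt_step, Hab]. Qed.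

Definition generated : lgraph F := restrict J reachable.

Definition gen_root : jN generated := exist _ n (rt_refl _ _ n).

(** Paths from n in J lift to paths from the root in the generated part. *)
Lemma generated_reaches_all : reaches_all generated gen_root.
Proof.
  intros [m Hm]. pose proof Hm as Hpath. apply clos_rt_rtn1 in Hpath. revert Hm.
  induction Hpath as [|y z Hyz Hny IH]; intros Hm.
  - rewrite (proof_irrelevance _ Hm (rt_refl _ _ n)). apply rt_refl.
  - eapply rt_trans; [apply (IH (clos_rtn1_rt _ _ _ _ Hny)) | apply rt_step].
    exact Hyz.
Qed.

Lemma generated_connected : connected generated.
Proof.
  intros a b. apply rst_trans with gen_root.
  - apply rst_sym, clos_rt_clos_rst, generated_reaches_all.
  - apply clos_rt_clos_rst, generated_reaches_all.
Qed.

End Reachable.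

Theorem mainTheorem1 (F : Type) (neg : F -> F) (lit : tv -> F)
    (Fd : F -> Prop) (R : F -> (F -> Prop) -> Prop) (Bev : branch F -> F)
    (HJF : justification_frame neg lit Fd R) :
  (forall (J : lgraph F) (n : jN J),
      is_justification Fd R J -> locally_complete Fd J -> graph_like J ->
      internal J n ->
      exists (J' : lgraph F) (n' : jN J'),
        is_justification Fd R J' /\ connected J' /\ locally_complete Fd J' /\
        graph_like J' /\ jl J' n' = jl J n /\ reaches_all J' n' /\
        (forall I, interpretation neg lit I ->
           tv_le (val Bev J n I) (val Bev J' n' I)))
  /\
  (forall (J : lgraph F) (n : jN J),
      is_justification Fd R J -> locally_complete Fd J -> tree_like J ->
      internal J n ->
      exists (J' : lgraph F) (n' : jN J'),
        is_justification Fd R J' /\ connected J' /\ locally_complete Fd J' /\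
        tree_like J' /\ jl J' n' = jl J n /\ reaches_all J' n' /\
        (forall I, interpretation neg lit I ->
           tv_le (val Bev J n I) (val Bev J' n' I))).
Proof.
  (* In both cases J' is the part of J generated by n, with root n. *)
  split; intros J n Hjust Hlc Hshape _;
    exists (generated J n), (gen_root J n);
    pose proof (reachable_closed J n) as Hclosed;
    (split; [exact (restrict_justification J _ Hclosed Fd R Hjust) |]);
    (split; [apply generated_connected |]);
    (split; [exact (restrict_locally_complete J _ Hclosed Fd Hlc) |]);
    (split; [first [exact (restrict_graph_like J _ Hshape)
                  | exact (restrict_tree_like J _ Hshape)] |]);
    (split; [reflexivity |]);
    (split; [apply generated_reaches_all |]);
    intros I _; change n with (proj1_sig (gen_root J n)) at 1;
    rewrite (restrict_val J _ Hclosed (gen_root J n) Bev I); apply tv_le_refl.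
Qed.
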